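(* Let $v,k$ be positive integers with $k\mid v$ and $v\mid k^2$, and let $\lambda=k^2/v$. Let $X=(x_t)_{t=0}^{v-1}$ be the binary sequence with $x_t=1$ for $0\le t\le k-1$ and $x_t=0$ for $k\le t\le v-1$. Let $Y=(y_t)_{t=0}^{v-1}$ be any binary sequence such that $y_{t+k}=y_t$ for all $t$ (indices modulo $v$) and $y_0y_1\dots y_{k-1}$ has weight $\lambda$. Then the subsets $A_X=\{t: x_t=1\}$ and $A_Y=\{t:y_t=1\}$ of $\mathbb{Z}_v$ form a $(v,2,k,\lambda)$-PSEDF in $\mathbb{Z}_v$ and a non-disjoint $(v,2,k,\lambda)$-SEDF in $\mathbb{Z}_v$.
   Context: A binary sequence $(x_t)_{t=0}^{v-1}$ corresponds to the subset $\{t\in\mathbb{Z}_v: x_t=1\}$ of $\mathbb{Z}_v$; its weight is the number of ones. For subsets $A,B$ of a group $G$, $\Delta(A,B)$ is the multiset $\{a-b:a\in A,b\in B\}$ and $\lambda G$ is the multiset with each element of $G$ exactly $\lambda$ times. For $G$ of order $v$ and $m>1$, a family of $k$-subsets $\{A_1,\dots,A_m\}$ of $G$ is a $(v,m,k,\lambda)$-PSEDF if $\Delta(A_i,A_j)=\lambda G$ for every $i\neq j$; it is a non-disjoint $(v,m,k,\lambda)$-SEDF if for each $i$ the multiset union $\bigcup_{j\neq i}\Delta(A_i,A_j)$ equals $\lambda G$. The sets need not be disjoint. *)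

(* Z_v is modelled as 'I_v with arithmetic mod v
   (avoids the 'Z_1 = 'Z_2 pitfall of 'Z_v). *)
From mathcomp Require Import all_boot.
Unset Printing Implicit Defensive.

Definition subZ (v : nat) (a b : 'I_v) : nat := (a + v - b) %% v.

(* multiplicity of g in the multiset Delta(A,B) = {a - b : a in A, b in B} *)
Definition diff_mult (v : nat) (A B : {set 'I_v}) (g : 'I_v) : nat :=
  #|[set p : 'I_v * 'I_v | [&& p.1 \in A, p.2 \in B & subZ v p.1 p.2 == g]]|.

Definition is_PSEDF (v m k lam : nat) (A : 'I_m -> {set 'I_v}) : Prop :=
  1 < m /\ (forall i, #|A i| = k) /\
  (forall i j : 'I_m, i != j -> forall g : 'I_v, diff_mult v (A i) (A j) g = lam).

Definition is_SEDF (v m k lam : nat) (A : 'I_m -> {set 'I_v}) : Prop :=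
  1 < m /\ (forall i, #|A i| = k) /\
  (forall (i : 'I_m) (g : 'I_v),
      \sum_(j < m | j != i) diff_mult v (A i) (A j) g = lam).

Definition support_set (v : nat) (x : nat -> bool) : {set 'I_v} :=
  [set t : 'I_v | x t].

Definition pair_family (v : nat) (A B : {set 'I_v}) : 'I_2 -> {set 'I_v} :=
  fun i => if val i == 0 then A else B.

From mathcomp Require Import all_boot ssralg zmodp.
Import GRing.Theory.

(* Counting pairs (a, b) with a - b = g, Delta(A_X, A_Y)(g) is the number of
   ones of Y in the cyclic window {-g, ..., -g + k - 1} and Delta(A_Y, A_X)(g)
   the number of ones in {g, ..., g + k - 1}.  As Y is k-periodic, every
   window of k consecutive positions has the weight lambda of y_0 ... y_(k-1),
   and A_Y, a union of v/k such windows, has (v/k) lambda = k elements.  With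
   only two sets, the SEDF condition is the PSEDF condition. *)

Section PeriodicSums.

Variables (k : nat) (f : nat -> nat).
Hypothesis f_periodic : forall i, f (i + k) = f i.

Lemma sum_periodic_shift s : \sum_(i < k) f (i + s) = \sum_(i < k) f i.
Proof.
elim: s => [|s IHs]; first by under eq_bigr do rewrite addn0.
rewrite -IHs; apply: (@addIn (f s)).
have split_ends := @big_ord_recl nat 0 addn k (fun i => f (i + s)).
rewrite big_ord_recr /= [k + s]addnC f_periodic add0n in split_ends.
by rewrite split_ends addnC; congr (_ + _); apply: eq_bigr => i _; rewrite addnS.
Qed.

Lemma sum_periodic_blocks n : \sum_(i < n * k) f i = n * \sum_(i < k) f i.
Proof.
elim: n => [|n IHn]; first by rewrite big_ord0.
rewrite mulSnr big_split_ord IHn [RHS]mulSnr; congr (_ + _).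
by rewrite -(sum_periodic_shift (n * k)); apply: eq_bigr => i _; rewrite [i + _]addnC.
Qed.

End PeriodicSums.

Lemma mod_periodic [v k] [y : nat -> bool] :
  (forall t, t < v -> y ((t + k) %% v) = y t) ->
  0 < v -> forall i, y ((i + k) %% v) = y (i %% v).
Proof. by move=> hy v_gt0 i; rewrite -modnDml hy ?ltn_mod. Qed.

Section DifferenceCounts.

(* On 'I_n.+1, zmodp provides the group Z/vZ, whose subtraction is subZ. *)
Variable n : nat.
Local Notation v := n.+1.

Lemma subZ_eq (a b g : 'I_v) : (subZ v a b == g) = (a == b + g)%R.
Proof.
have -> : subZ v a b = (a - b)%R :> nat.
  by rewrite /subZ /= modnDmr addnBA // ltnW.
by rewrite val_eqE subr_eq addrC.
Qed.

Lemma diff_mult_sum (A B : {set 'I_v}) g :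
  diff_mult v A B g = \sum_a \sum_b ((a \in A) && (b \in B) && (a == b + g)%R).
Proof.
rewrite /diff_mult -sum1_card pair_big big_mkcond /=.
by apply: eq_bigr => -[a b] _; rewrite !inE subZ_eq andbA; case: ifP.
Qed.

Lemma diff_mult_suml (A B : {set 'I_v}) g :
  diff_mult v A B g = \sum_(a in A) (a - g \in B)%R.
Proof.
rewrite diff_mult_sum [RHS]big_mkcond; apply: eq_bigr => a _.
rewrite (bigD1 (a - g)%R) //= subrK eqxx andbT big1 => [|b].
  by rewrite addn0; case: (a \in A).
move=> ne_b; suff -> : (a == b + g)%R = false by rewrite andbF.
by apply: contraNF ne_b => /eqP->; rewrite addrK.
Qed.

Lemma diff_mult_sumr (A B : {set 'I_v}) g :
  diff_mult v A B g = \sum_(b in B) (b + g \in A)%R.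
Proof.
rewrite diff_mult_sum exchange_big [RHS]big_mkcond; apply: eq_bigr => b _.
rewrite (bigD1 (b + g)%R) //= eqxx andbT big1 => [|a /negbTE ->].
  by rewrite addn0 andbC; case: (b \in B).
by rewrite andbF.
Qed.

End DifferenceCounts.

Lemma sum_support_ltn [v k] (F : nat -> nat) : k <= v ->
  \sum_(t in support_set v (fun t => t < k)) F t = \sum_(t < k) F t.
Proof.
by move=> le_kv; rewrite (big_ord_widen v) //; apply: eq_bigl => t; rewrite inE.
Qed.

Lemma card_support_ltn [v k] : k <= v -> #|support_set v (fun t => t < k)| = k.
Proof.
by move=> le_kv; rewrite -sum1_card (sum_support_ltn (fun _ => 1)) // sum1_card card_ord.
Qed.

Section PeriodicSupport.

Context {n k : nat} {y : nat -> bool}.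
Local Notation v := n.+1.
Local Notation I := (support_set v (fun t => t < k)).
Local Notation Y := (support_set v y).
Hypothesis y_periodic : forall i, y ((i + k) %% v) = y (i %% v).
Hypothesis le_kv : k <= v.

Let f i : nat := y (i %% v).
Let f_periodic i : f (i + k) = f i. Proof. by rewrite /f y_periodic. Qed.

Lemma diff_mult_interval_l g : diff_mult v I Y g = \sum_(i < k) f i.
Proof.
rewrite diff_mult_suml (eq_bigr (fun a : 'I_v => f (a + (v - g)))) => [|a _].
  by rewrite (sum_support_ltn (fun a => f (a + (v - g)))) // sum_periodic_shift.
by rewrite inE /= modnDmr.
Qed.

Lemma diff_mult_interval_r g : diff_mult v Y I g = \sum_(i < k) f i.
Proof.
rewrite diff_mult_sumr (eq_bigr (fun b : 'I_v => f (b + g))) => [|b _].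
  by rewrite (sum_support_ltn (fun b => f (b + g))) // sum_periodic_shift.
by rewrite inE.
Qed.

Lemma card_support_periodic : k %| v -> #|Y| = v %/ k * \sum_(i < k) f i.
Proof.
move=> dvd_kv; rewrite -sum_periodic_blocks // divnK // -sum1_card big_mkcond.
by apply: eq_bigr => t _; rewrite inE /f modn_small //; case: (y t).
Qed.

End PeriodicSupport.

Lemma pair_family_PSEDF [v k lam] [A B : {set 'I_v}] :
  #|A| = k -> #|B| = k ->
  (forall g, diff_mult v A B g = lam) -> (forall g, diff_mult v B A g = lam) ->
  is_PSEDF v 2 k lam (pair_family v A B).
Proof.
move=> cardA cardB dAB dBA; split=> //; split=> [i|].
  by rewrite /pair_family; case: ifP.
by move=> [[|[|i]] hi] [[|[|j]] hj].
Qed.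

Lemma PSEDF_SEDF [v m k lam] [A : 'I_m -> {set 'I_v}] :
  is_PSEDF v m k lam A -> is_SEDF v m k (m.-1 * lam) A.
Proof.
move=> [m_gt1 [cardA dA]]; split=> //; split=> // i g.
rewrite (eq_bigr (fun=> lam)) => [|j ji]; last by rewrite dA // eq_sym.
by rewrite sum_nat_const cardC1 card_ord.
Qed.

Theorem theorem3p4 (v k : nat) (y : nat -> bool) :
  0 < v -> 0 < k -> k %| v -> v %| k ^ 2 ->
  (forall t, t < v -> y ((t + k) %% v) = y t) ->
  \sum_(t < k) (y t : nat) = k ^ 2 %/ v ->
  let x := fun t : nat => t < k in
  let A := pair_family v (support_set v x) (support_set v y) in
  is_PSEDF v 2 k (k ^ 2 %/ v) A /\ is_SEDF v 2 k (k ^ 2 %/ v) A.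
Proof.
move=> v_gt0 _ dvd_kv dvd_vk2 y_periodic weight x A; rewrite {}/A {}/x.
case: v => [//|n] in v_gt0 dvd_kv dvd_vk2 y_periodic weight *.
have le_kv : k <= n.+1 := dvdn_leq v_gt0 dvd_kv.
have y_mod := mod_periodic y_periodic v_gt0.
have window : \sum_(i < k) (y (i %% n.+1) : nat) = k ^ 2 %/ n.+1.
  by rewrite -weight; apply: eq_bigr => i _; rewrite modn_small // (leq_trans (ltn_ord i)).
have card_Y : #|support_set n.+1 y| = k.
  rewrite (card_support_periodic y_mod) // window muln_divA // expnS expn1 mulnA divnK //.
  exact: mulKn.
have PSEDF := pair_family_PSEDF (card_support_ltn le_kv) card_Y
  (fun g => etrans (diff_mult_interval_l y_mod le_kv g) window)
  (fun g => etrans (diff_mult_interval_r y_mod le_kv g) window).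
by split=> //; have := PSEDF_SEDF PSEDF; rewrite mul1n.
Qed.
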